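(* Let $H=l_2$ be the real separable infinite-dimensional Hilbert space with zero $\theta$. Let $d\in H$ with $\|d\|=1$ and let $\gamma\in[0,\pi]$ with $\gamma\leqslant\arccos\frac14$. Then $C(-\tfrac12 d,\tfrac12 d,\gamma)\subset\overline{B}(\theta,1)$.
   Context: $\overline{B}(\theta,1)=\{x\in H:\|x\|\leqslant1\}$. For $x,y\in H$, $\angle(x,y)=\arccos\frac{\langle x,y\rangle}{\|x\|\,\|y\|}\in[0,\pi]$, with $\angle(x,y)=0$ if $x=\theta$ or $y=\theta$. For $s\ne e$ and $\gamma\in[0,\pi]$, the ommatidium is $C(s,e,\gamma)=\{x\in H:\ \|x-s\|\leqslant\|e-s\|\text{ and }\angle(x-s,e-s)\leqslant\gamma\}$. *)

From Stdlib Require Import Reals Lra ClassicalEpsilon.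
From Coquelicot Require Import Coquelicot.
Open Scope R_scope.

(* H = l_2: real square-summable sequences; vectors are raw sequences nat -> R,
   membership in H is the predicate is_l2. *)
Definition is_l2 (x : nat -> R) : Prop := ex_series (fun n => x n ^ 2).

Definition theta : nat -> R := fun _ => 0.
Definition vadd (x y : nat -> R) : nat -> R := fun n => x n + y n.
Definition vsub (x y : nat -> R) : nat -> R := fun n => x n - y n.
Definition vscal (a : R) (x : nat -> R) : nat -> R := fun n => a * x n.

Definition inner (x y : nat -> R) : R := Series (fun n => x n * y n).
Definition l2norm (x : nat -> R) : R := sqrt (inner x x).

Definition angle (x y : nat -> R) : R :=
  if excluded_middle_informative (x = theta \/ y = theta) then 0
  else acos (inner x y / (l2norm x * l2norm y)).

Definition ommatidium (s e : nat -> R) (g : R) (x : nat -> R) : Prop :=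
  is_l2 x /\ l2norm (vsub x s) <= l2norm (vsub e s)
  /\ angle (vsub x s) (vsub e s) <= g.

Definition closed_ball (c : nat -> R) (r : R) (x : nat -> R) : Prop :=
  is_l2 x /\ l2norm (vsub x c) <= r.

(* Put y := x + d/2, the position of x seen from the apex -d/2.  The ommatidium gives
   |y| <= 1 and, through the angle condition, <y, d> >= |y|/4.  Expanding
   x = y - d/2 yields |x|^2 = |y|^2 - <y, d> + 1/4 <= t^2 - t/4 + 1/4 with t = |y|,
   and t^2 - t/4 + 1/4 <= 1 on [0, 1] because (t - 1) (t + 3/4) <= 0 there. *)

From Stdlib Require Import Reals Lra ClassicalEpsilon.
From Coquelicot Require Import Coquelicot.
Open Scope R_scope.

(* dominated by (a^2 + b^2) / 2 *)
Lemma ex_series_mul_l2 (a b : nat -> R) :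
  is_l2 a -> is_l2 b -> ex_series (fun n => a n * b n).
Proof.
  intros Ha Hb.
  apply (@ex_series_le R_AbsRing R_CompleteNormedModule _
           (fun n => / 2 * (a n ^ 2 + b n ^ 2))).
  - intros n. change (norm (a n * b n)) with (Rabs (a n * b n)).
    pose proof (pow2_ge_0 (a n - b n)). pose proof (pow2_ge_0 (a n + b n)).
    destruct (Rle_dec 0 (a n * b n)).
    + rewrite Rabs_right by lra. nra.
    + rewrite Rabs_left by lra. nra.
  - exact (ex_series_scal_l _ _ (ex_series_plus _ _ Ha Hb)).
Qed.

Lemma is_l2_vsub (x y : nat -> R) : is_l2 x -> is_l2 y -> is_l2 (vsub x y).
Proof.
  intros Hx Hy. unfold is_l2, vsub.
  apply (ex_series_ext (fun n => (x n ^ 2 + -2 * (x n * y n)) + y n ^ 2)).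
  { intros n. simpl. ring. }
  exact (ex_series_plus _ _
           (ex_series_plus _ _ Hx (ex_series_scal_l _ _ (ex_series_mul_l2 _ _ Hx Hy))) Hy).
Qed.

Lemma is_l2_vscal (a : R) (x : nat -> R) : is_l2 x -> is_l2 (vscal a x).
Proof.
  intros Hx. unfold is_l2, vscal.
  apply (ex_series_ext (fun n => a ^ 2 * x n ^ 2)); [intros n; simpl; ring|].
  exact (ex_series_scal_l _ _ Hx).
Qed.

Lemma inner_ext (x x' y y' : nat -> R) :
  (forall n, x n = x' n) -> (forall n, y n = y' n) -> inner x y = inner x' y'.
Proof.
  intros Ex Ey. unfold inner. apply Series_ext. intros n. now rewrite Ex, Ey.
Qed.

Lemma inner_theta_l (y : nat -> R) : inner theta y = 0.
Proof.
  unfold inner, theta. rewrite Series_scal_l. ring.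
Qed.

Lemma inner_theta_r (x : nat -> R) : inner x theta = 0.
Proof.
  unfold inner, theta. rewrite Series_scal_r. ring.
Qed.

Lemma l2norm_theta : l2norm theta = 0.
Proof. unfold l2norm. now rewrite inner_theta_l, sqrt_0. Qed.

Lemma inner_self_ge0 (x : nat -> R) : is_l2 x -> 0 <= inner x x.
Proof.
  intros Hx. unfold inner.
  replace 0 with (Series (fun n => 0 * (x n * x n))) by (rewrite Series_scal_l; ring).
  apply Series_le; [intros n; pose proof (Rle_0_sqr (x n)); unfold Rsqr in *; lra|].
  now apply ex_series_mul_l2.
Qed.

Lemma l2norm_sqr (x : nat -> R) : is_l2 x -> l2norm x ^ 2 = inner x x.
Proof.
  intros Hx. unfold l2norm. apply pow2_sqrt, inner_self_ge0, Hx.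
Qed.

Lemma inner_vsub_vscal_self (a : R) (y u : nat -> R) :
  is_l2 y -> is_l2 u ->
  inner (vsub y (vscal a u)) (vsub y (vscal a u))
  = inner y y - 2 * a * inner y u + a ^ 2 * inner u u.
Proof.
  intros Hy Hu.
  assert (Eyy : ex_series (fun n => y n * y n)) by exact (ex_series_mul_l2 _ _ Hy Hy).
  assert (Eyu : ex_series (fun n => - 2 * a * (y n * u n)))
    by exact (ex_series_scal_l _ _ (ex_series_mul_l2 _ _ Hy Hu)).
  assert (Euu : ex_series (fun n => a ^ 2 * (u n * u n)))
    by exact (ex_series_scal_l _ _ (ex_series_mul_l2 _ _ Hu Hu)).
  assert (Eyyu : ex_series (fun n => y n * y n + - 2 * a * (y n * u n)))
    by exact (ex_series_plus _ _ Eyy Eyu).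
  unfold inner, vsub, vscal.
  rewrite (Series_ext _
             (fun n => (y n * y n + (- 2 * a) * (y n * u n)) + a ^ 2 * (u n * u n)))
    by (intros n; ring).
  rewrite Series_plus, Series_plus, !Series_scal_l by assumption.
  ring.
Qed.

Lemma acos_le_inv (a b : R) : -1 < b < 1 -> acos a <= acos b -> b <= a.
Proof.
  intros Hb Hab.
  destruct (Rle_dec a (-1)) as [Ha|Ha].
  - unfold acos at 1 in Hab. destruct (Rle_dec a (-1)); [|contradiction].
    pose proof (acos_bound_lt b Hb). lra.
  - destruct (Rle_dec 1 a) as [Ha'|Ha']; [lra|].
    pose proof (acos_bound a). pose proof (acos_bound b).
    assert (Hcos : cos (acos b) <= cos (acos a)) by (apply cos_decr_1; lra).
    rewrite !cos_acos in Hcos by lra. exact Hcos.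
Qed.

(* No nonzero hypotheses are needed: for [x] or [y] equal to [theta] both sides
   vanish, and a zero product of norms makes the cosine [inner x y / 0 = 0 < c]. *)
Lemma inner_ge_of_angle_le (c : R) (x y : nat -> R) :
  0 < c < 1 -> angle x y <= acos c -> c * (l2norm x * l2norm y) <= inner x y.
Proof.
  intros Hc Hang. unfold angle in Hang.
  destruct (excluded_middle_informative _) as [[-> | ->] | _].
  - rewrite l2norm_theta, inner_theta_l. lra.
  - rewrite l2norm_theta, inner_theta_r. lra.
  - apply acos_le_inv in Hang; [|lra].
    assert (Hnn : 0 <= l2norm x * l2norm y)
      by (apply Rmult_le_pos; apply sqrt_pos).
    destruct (Rle_lt_or_eq_dec _ _ Hnn) as [Hpos | Hz].
    + apply (Rmult_le_compat_r (l2norm x * l2norm y)) in Hang; [|lra].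
      unfold Rdiv in Hang. rewrite Rmult_assoc, Rinv_l, Rmult_1_r in Hang by lra.
      lra.
    + unfold Rdiv in Hang. rewrite <- Hz, Rinv_0 in Hang.
      lra.
Qed.

Lemma sqr_sub_add_quarter_le_1 (t p : R) : 0 <= t <= 1 -> t / 4 <= p -> t ^ 2 - p + 1 / 4 <= 1.
Proof. intros Ht Hp. nra. Qed.

Theorem lemma12 (d : nat -> R) (g : R) :
  is_l2 d -> l2norm d = 1 ->
  0 <= g <= PI -> g <= acos (1 / 4) ->
  forall x : nat -> R,
    ommatidium (vscal (- (1 / 2)) d) (vscal (1 / 2) d) g x ->
    closed_ball theta 1 x.
Proof.
  intros Hd Hd1 _ Hg x [Hx [Hy1 Hang]].
  set (s := vscal (- (1 / 2)) d) in *.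
  set (y := vsub x s) in *.
  set (u := vsub (vscal (1 / 2) d) s) in *.
  assert (Hud : forall n, u n = d n)
    by (intros n; unfold u, s, vsub, vscal; lra).
  assert (Hy : is_l2 y) by (apply is_l2_vsub, is_l2_vscal; assumption).
  assert (Hu : is_l2 u) by (apply is_l2_vsub; apply is_l2_vscal, Hd).
  assert (Hu1 : l2norm u = 1)
    by (unfold l2norm; rewrite (inner_ext _ _ _ _ Hud Hud); exact Hd1).
  rewrite Hu1 in Hy1.
  assert (Hxx : inner x x = inner y y - inner y u + / 4 * inner u u).
  { assert (Hxy : forall n, x n = vsub y (vscal (1 / 2) u) n)
      by (intros n; unfold y, s, vsub, vscal; rewrite Hud; lra).
    rewrite (inner_ext _ _ _ _ Hxy Hxy), inner_vsub_vscal_self by assumption.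
    field. }
  assert (Hyu : 1 / 4 * (l2norm y * l2norm u) <= inner y u)
    by (apply inner_ge_of_angle_le; [lra | exact (Rle_trans _ _ _ Hang Hg)]).
  rewrite Hu1, Rmult_1_r in Hyu.
  split; [exact Hx|].
  unfold l2norm. rewrite (inner_ext _ x _ x) by (intros n; unfold vsub, theta; ring).
  rewrite <- sqrt_1. apply sqrt_le_1_alt.
  rewrite Hxx, <- (l2norm_sqr y Hy), <- (l2norm_sqr u Hu), Hu1.
  pose proof (sqr_sub_add_quarter_le_1 (l2norm y) (inner y u)
                (conj (sqrt_pos _) Hy1) ltac:(lra)).
  lra.
Qed.
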